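(* Let $m\geq1$ and $k\geq2$ be integers, and let $H$ be an $m$-connected, $(n-km+2m-1)$-closed graph of order $n\geq(7k-2)m+4$. If $e(H)\geq\binom{n-(k-1)m-2}{2}+(k-1)m^2+(k+1)m+3$, then $\omega(H)\geq n-(k-1)m-1$.
   Context: All graphs are finite and simple; $e(H)$ is the number of edges and $\omega(H)$ the clique number. A graph $H$ is $l$-closed if every pair of nonadjacent vertices $u,v$ satisfies $d_H(u)+d_H(v)<l$. *)

(* A finite simple graph is a symmetric irreflexive relation
   [e : rel T] on a finite vertex type [T]. *)
From mathcomp Require Import all_boot.
Set Implicit Arguments. Unset Strict Implicit. Unset Printing Implicit Defensive.

Section Graphs.
Variables (T : finType) (e : rel T).

Definition deg (x : T) : nat := #|[set y | e x y]|.

Definition is_clique (A : {set T}) : bool :=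
  [forall x in A, forall y in A, (x != y) ==> e x y].

Definition nedges : nat :=
  #|[set A : {set T} | (#|A| == 2) && is_clique A]|.

Definition clique_number : nat := \max_(A : {set T} | is_clique A) #|A|.

Definition connected_without (S : {set T}) : Prop :=
  forall x y, x \notin S -> y \notin S ->
    connect [rel u v | [&& e u v, u \notin S & v \notin S]] x y.

Definition k_connected (m : nat) : Prop :=
  m < #|T| /\ forall S : {set T}, #|S| < m -> connected_without S.

Definition l_closed (l : nat) : Prop :=
  forall u v, u != v -> ~~ e u v -> deg u + deg v < l.

End Graphs.

From mathcomp Require Import all_boot zify.

(* Write n = t + q + 1 with q = (k - 1) m, so that H is (t + m)-closed and the
   bound on e(H) reads C(t - 1, 2) + q m + q + 2 m + 3.  Call a vertex heavy
   when twice its degree is at least t + m.  By closedness any two heavy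
   vertices are adjacent, so the heavy vertices form a clique A, and it
   suffices to show |A| >= t.  Otherwise count edges by summing degrees.  If
   2|A| <= t + m, light vertices have degree < (t + m) / 2, which leaves too
   few edges.  If 2|A| > t + m, a light vertex x cannot see all of A, and
   closedness against a non-neighbour y in A (of degree >= |A| - 1) gives
   deg x <= t + m - |A|; together with the at most C(|A|, 2) edges inside A
   this again leaves too few edges. *)

Set Implicit Arguments.
Unset Strict Implicit.
Unset Printing Implicit Defensive.

Lemma double_bin2 n : 2 * 'C(n, 2) = n * n.-1.
Proof. by rewrite -[2 in LHS]/(2`!) mulnC bin_ffact ffactnS ffactn1. Qed.

Lemma edge_bound_few_heavy t q m a b :
  0 < m -> 0 < q -> 6 * q + 5 * m + 3 <= t -> 2 * a <= t + m ->
  a + b = t + q + 1 ->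
  2 * (a * (t + q)) + b * (t + m).-1
    < 4 * ('C(t.-1, 2) + q * m + q + 2 * m + 3).
Proof.
move=> m_gt0 q_gt0 t_large few ab.
have [x qE] : exists x, q = x.+1 by exists q.-1; lia.
have [y mE] : exists y, m = y.+1 by exists m.-1; lia.
have [d tE] : exists d, t = 14 + 6 * x + 5 * y + d.
  by exists (t - (14 + 6 * x + 5 * y)); lia.
have := double_bin2 t.-1.
have -> : t.-2 = 12 + 6 * x + 5 * y + d by lia.
have -> : t.-1 = 13 + 6 * x + 5 * y + d by lia.
have -> : (t + m).-1 = 14 + 6 * x + 6 * y + d by lia.
move: few ab; rewrite qE mE tE => few ab bin_t.
have few_scaled : 2 * a * (16 + 8 * x + 4 * y + d)
                  <= (15 + 6 * x + 6 * y + d) * (16 + 8 * x + 4 * y + d).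
  by rewrite leq_mul2r; apply/orP; right; lia.
have sum_ab : (a + b) * (14 + 6 * x + 6 * y + d)
              = (16 + 7 * x + 5 * y + d) * (14 + 6 * x + 6 * y + d).
  by rewrite ab; congr (_ * _); lia.
(* Only for (q, m, t) = (1, 1, 14) is replacing 2a by t + m too lossy; there
   2a <= 15 forces a <= 7. *)
have [pos|] := ltnP 0 (x + y + d).
  have : (15 + 6 * x + 6 * y + d) * (16 + 8 * x + 4 * y + d)
         + 2 * ((16 + 7 * x + 5 * y + d) * (14 + 6 * x + 6 * y + d))
         < 4 * ((13 + 6 * x + 5 * y + d) * (12 + 6 * x + 5 * y + d))
           + 8 * ((1 + x) * (1 + y) + (1 + x) + 2 * (1 + y) + 3).
    by clear -pos; nia.
  lia.
rewrite leqn0 !addn_eq0 => /andP[/andP[/eqP x0 /eqP y0] /eqP d0].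
by subst; lia.
Qed.

Lemma edge_bound_many_heavy t q m a b :
  t + 2 * q + 2 * m + 6 <= 3 * a -> a < t -> a + b = t + q + 1 ->
  a * a.-1 + 2 * (b * (t + m - a))
    < 2 * ('C(t.-1, 2) + q * m + q + 2 * m + 3).
Proof.
move=> many a_lt_t ab.
rewrite !mulnDr double_bin2.
have [u tE] : exists u, t = a.+1 + u by exists (t - a.+1); lia.
have -> : b = q + 2 + u by lia.
have -> : t + m - a = u.+1 + m by lia.
(* With u = t - 1 - a, the left side equals its value at a = t - 1, which is
   2 below the right side, minus u * (3a - t - 2q - 2m - 6). *)
have -> : t.-1 * t.-1.-1 = a * a.-1 + u * (2 * a + u).-1.
  by rewrite tE; case: a {many a_lt_t ab tE} => [|a]; nia.
have : u * (u + 2 * m + 2 * q + 7) <= u * (2 * a) by apply: leq_mul; lia.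
nia.
Qed.

Lemma sum_bool_card (U : finType) (A : {pred U}) (P : pred U) :
  \sum_(z in A) P z = #|[set z in A | P z]|.
Proof. by rewrite -big_mkcondr sum1dep_card. Qed.

Lemma sum_setC_split (U : finType) (A : {set U}) (F : U -> nat) :
  \sum_x F x = \sum_(x in A) F x + \sum_(x in ~: A) F x.
Proof.
by rewrite (bigID (mem A)); congr (_ + _); apply: eq_bigl => x; rewrite in_setC.
Qed.

Section SimpleGraph.
Variables (T : finType) (e : rel T).
Hypotheses (e_sym : symmetric e) (e_irr : irreflexive e).

Lemma deg_sum x : deg e x = \sum_y e x y.
Proof. by rewrite sum_bool_card; apply: eq_card => y; rewrite !inE. Qed.

Lemma deg_le_pred_card x : deg e x <= #|T|.-1.
Proof.
rewrite /deg -cardsT (cardsD1 x [set: T]) inE /=.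
apply: subset_leq_card; apply/subsetP => y; rewrite !inE andbT => exy.
by apply: contraTneq exy => ->; rewrite e_irr.
Qed.

Lemma is_cliqueP (A : {set T}) :
  reflect {in A &, forall x y, x != y -> e x y} (is_clique e A).
Proof.
apply: (iffP forall_inP) => [cl x y xA yA | cl x xA].
  by move/forall_inP: (cl x xA) => /(_ y yA)/implyP.
by apply/forall_inP => y yA; apply/implyP; exact: cl.
Qed.

Lemma clique_le_clique_number (A : {set T}) :
  is_clique e A -> #|A| <= clique_number e.
Proof. exact: (@leq_bigmax_cond _ (is_clique e) (fun B => #|B|)). Qed.

Lemma clique_deg (A : {set T}) x :
  is_clique e A -> x \in A -> #|A|.-1 <= deg e x.
Proof.
move=> /is_cliqueP cl xA; rewrite (cardsD1 x) xA /=.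
apply: subset_leq_card; apply/subsetP => y; rewrite !inE => /andP[yx yA].
by apply: cl; rewrite // eq_sym.
Qed.

Lemma double_nedges_le_sum_deg : 2 * nedges e <= \sum_x deg e x.
Proof.
set E := [set B : {set T} | (#|B| == 2) && is_clique e B].
have -> : 2 * nedges e = \sum_x \sum_(B in E) (x \in B).
  rewrite exchange_big /nedges -/E mulnC -sum_nat_const /=.
  apply: eq_bigr => B; rewrite inE => /andP[/eqP cardB _].
  by rewrite sum_bool_card -cardB; apply: eq_card => x; rewrite !inE.
apply: leq_sum => x _; rewrite sum_bool_card.
apply: leq_trans (leq_imset_card (fun y => [set x; y]) [set y | e x y]).
apply: subset_leq_card; apply/subsetP => B.
rewrite !inE => /andP[/andP[/cards2P[u [v [uv ->]]] /is_cliqueP cl] xB].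
have [u_in v_in] : u \in [set u; v] /\ v \in [set u; v].
  by rewrite !inE !eqxx orbT.
move: xB; rewrite !inE => /orP[/eqP-> | /eqP->].
  by apply/imsetP; exists v; rewrite // inE cl.
by apply/imsetP; exists u; rewrite 1?setUC // inE cl // eq_sym.
Qed.

Lemma sum_deg_le (A : {set T}) :
  \sum_(x in A) deg e x <= #|A| * #|A|.-1 + \sum_(x in ~: A) deg e x.
Proof.
under eq_bigr do rewrite deg_sum (sum_setC_split A).
rewrite big_split /= -sum_nat_const; apply: leq_add.
  apply: leq_sum => x xA; rewrite sum_bool_card (cardsD1 x A) xA /=.
  apply: subset_leq_card; apply/subsetP => y; rewrite !inE => /andP[yA exy].
  by rewrite yA andbT; apply: contraTneq exy => ->; rewrite e_irr.
rewrite exchange_big /=; apply: leq_sum => y _.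
by under eq_bigr do rewrite e_sym; rewrite deg_sum (sum_setC_split A) leq_addr.
Qed.

Section HeavyVertices.
Variable l : nat.
Hypothesis closed : l_closed e l.

Definition heavy : {set T} := [set x | l <= 2 * deg e x].

Lemma heavy_clique : is_clique e heavy.
Proof.
apply/is_cliqueP => x y; rewrite !inE => hx hy xy.
by apply/negPn/negP => nexy; have := closed xy nexy; lia.
Qed.

Lemma light_deg x : x \notin heavy -> 2 * deg e x < l.
Proof. by rewrite inE -ltnNge. Qed.

Lemma light_deg_le x :
  l < 2 * #|heavy| -> x \notin heavy -> deg e x <= l - #|heavy|.
Proof.
move=> many x_light; have x_deg := light_deg x_light.
have /subsetPn[y y_heavy] : ~~ (heavy \subset [set y | e x y]).
  by apply/negP => /subset_leq_card; rewrite -/(deg e x); lia.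
rewrite inE => nexy.
have xy : x != y by apply: contraNneq x_light => ->.
have := closed xy nexy; have := clique_deg heavy_clique y_heavy; lia.
Qed.

Lemma nedges_le_few_heavy :
  4 * nedges e <= 2 * (#|heavy| * #|T|.-1) + #|~: heavy| * l.-1.
Proof.
have := double_nedges_le_sum_deg; rewrite (sum_setC_split heavy).
have : \sum_(x in heavy) deg e x <= #|heavy| * #|T|.-1.
  by rewrite -sum_nat_const leq_sum // => x _; exact: deg_le_pred_card.
have : \sum_(x in ~: heavy) 2 * deg e x <= #|~: heavy| * l.-1.
  rewrite -sum_nat_const leq_sum // => x; rewrite inE => /light_deg; lia.
rewrite -big_distrr /=; lia.
Qed.

Lemma nedges_le_many_heavy : l < 2 * #|heavy| ->
  2 * nedges e <= #|heavy| * #|heavy|.-1 + 2 * (#|~: heavy| * (l - #|heavy|)).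
Proof.
move=> many; have := double_nedges_le_sum_deg; rewrite (sum_setC_split heavy).
have := sum_deg_le heavy.
have : \sum_(x in ~: heavy) deg e x <= #|~: heavy| * (l - #|heavy|).
  by rewrite -sum_nat_const leq_sum // => x; rewrite inE; exact: light_deg_le.
lia.
Qed.

End HeavyVertices.

Theorem dense_closed_clique_number t q m :
  0 < m -> 0 < q -> #|T| = t + q + 1 -> l_closed e (t + m) ->
  6 * q + 5 * m + 3 <= t ->
  'C(t.-1, 2) + q * m + q + 2 * m + 3 <= nedges e -> t <= clique_number e.
Proof.
move=> m_gt0 q_gt0 cardT closed t_large dense.
apply: leq_trans (clique_le_clique_number (heavy_clique closed)).
rewrite leqNgt; apply/negP => small_clique.
have cardC : #|heavy (t + m)| + #|~: heavy (t + m)| = t + q + 1.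
  by rewrite cardsC.
have [few | many] := leqP (2 * #|heavy (t + m)|) (t + m).
  have := edge_bound_few_heavy m_gt0 q_gt0 t_large few cardC.
  have := nedges_le_few_heavy (t + m); rewrite cardT; lia.
have many3 : t + 2 * q + 2 * m + 6 <= 3 * #|heavy (t + m)| by lia.
have := edge_bound_many_heavy many3 small_clique cardC.
have := nedges_le_many_heavy closed many; lia.
Qed.

End SimpleGraph.

Theorem lemma3p1 (T : finType) (e : rel T)
  (e_sym : symmetric e) (e_irr : irreflexive e) (m k n : nat) :
  1 <= m -> 2 <= k -> #|T| = n ->
  k_connected e m ->
  l_closed e (n - k * m + 2 * m - 1) ->
  (7 * k - 2) * m + 4 <= n ->
  'C(n - (k - 1) * m - 2, 2) + (k - 1) * m ^ 2 + (k + 1) * m + 3 <= nedges e ->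
  n - (k - 1) * m - 1 <= clique_number e.
Proof.
move=> m_gt0 k_ge2 cardT _ closed n_large dense.
set q := (k - 1) * m in dense *.
have q_gt0 : 0 < q by rewrite muln_gt0; lia.
have lE : n - k * m + 2 * m - 1 = n - q - 1 + m by rewrite /q; nia.
have n_largeE : (7 * k - 2) * m = 7 * q + 5 * m by rewrite /q; nia.
have denseE : (k - 1) * m ^ 2 + (k + 1) * m = q * m + q + 2 * m.
  by rewrite /q; nia.
rewrite lE in closed; rewrite n_largeE in n_large.
apply: (dense_closed_clique_number e_sym e_irr m_gt0 q_gt0 _ closed).
- by lia.
- by lia.
- by rewrite (_ : (n - q - 1).-1 = n - q - 2); lia.
Qed.
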